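(* Consider only finite-dimensional Hilbert spaces $E$ (i.e. $E=\mathbb{C}^n$, $n\geq1$). Let $(D(E))$ be a free set with $D(E)\subseteq\mathcal{B}(E)^k$ such that each $D(E)$ contains an open neighborhood of $0$, and let $F:D(E)\to\mathcal{B}(E)$ be a free function which is complex-linear, i.e. $F(\alpha X+\beta Y)=\alpha F(X)+\beta F(Y)$ whenever $\alpha,\beta\in\mathbb{C}$ and $X,Y,\alpha X+\beta Y\in D(E)$. Then there exist $a_1,\dots,a_k\in\mathbb{C}$ (independent of $E$) such that $$F(X)=\sum_{j=1}^k a_jX_j\qquad\text{for all } X\in D(E)\text{ and all } E.$$
   Context: $\mathcal{B}(E)$: linear operators on $E$. A free set is a collection $(D(E))$ with $U^*D(E)U\subseteq D(K)$ for unitaries $U:K\to E$ (where $U^*XU=(U^*X_1U,\dots,U^*X_kU)$) and $D(E)\oplus D(K)\subseteq D(E\oplus K)$. A free function $F:D(E)\to\mathcal{B}(E)$ satisfies $F(U^*A_1U,\dots,U^*A_kU)=U^*F(A)U$ for unitaries $U$ and $F(A_1\oplus B_1,\dots,A_k\oplus B_k)=F(A)\oplus F(B)$. *)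

(* Complex scalars: an arbitrary numClosedFieldType C. *)
From HB Require Import structures.
From mathcomp Require Import all_boot all_order all_algebra.
Set Implicit Arguments. Unset Strict Implicit. Unset Printing Implicit Defensive.
Import Order.TTheory GRing.Theory Num.Theory.
Local Open Scope ring_scope.

Definition adjmx (C : numClosedFieldType) (n : nat) (A : 'M[C]_n) : 'M[C]_n :=
  (map_mx Num.conj A)^T.

Definition unitary_mx (C : numClosedFieldType) (n : nat) (U : 'M[C]_n) : Prop :=
  adjmx U *m U = 1%:M /\ U *m adjmx U = 1%:M.

Definition tup (C : numClosedFieldType) (k n : nat) := 'I_k -> 'M[C]_n.

Definition free_set (C : numClosedFieldType) (k : nat)
  (D : forall n : nat, tup C k n -> Prop) : Prop :=
  (forall (n : nat) (U : 'M[C]_n) (X : tup C k n), (0 < n)%N ->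
     unitary_mx U -> D n X -> D n (fun j => adjmx U *m X j *m U)) /\
  (forall (n m : nat) (X : tup C k n) (Y : tup C k m), (0 < n)%N -> (0 < m)%N ->
     D n X -> D m Y -> D (n + m)%N (fun j => block_mx (X j) 0 0 (Y j))).

Definition free_fun (C : numClosedFieldType) (k : nat)
  (D : forall n : nat, tup C k n -> Prop)
  (F : forall n : nat, tup C k n -> 'M[C]_n) : Prop :=
  (forall (n : nat) (U : 'M[C]_n) (X : tup C k n), (0 < n)%N ->
     unitary_mx U -> D n X ->
     F n (fun j => adjmx U *m X j *m U) = adjmx U *m F n X *m U) /\
  (forall (n m : nat) (X : tup C k n) (Y : tup C k m), (0 < n)%N -> (0 < m)%N ->
     D n X -> D m Y ->
     F (n + m)%N (fun j => block_mx (X j) 0 0 (Y j)) = block_mx (F n X) 0 0 (F m Y)).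

(* D n contains an open neighbourhood of 0 in B(C^n)^k (entrywise sup norm,
   equivalent to any norm topology in finite dimension). *)
Definition contains_nbhd0 (C : numClosedFieldType) (k n : nat)
  (Dn : tup C k n -> Prop) : Prop :=
  exists eps : C, 0 < eps /\
    forall X : tup C k n, (forall j i l, `|X j i l| < eps) -> Dn X.

Definition linear_on (C : numClosedFieldType) (k : nat)
  (D : forall n : nat, tup C k n -> Prop)
  (F : forall n : nat, tup C k n -> 'M[C]_n) : Prop :=
  forall (n : nat) (a b : C) (X Y : tup C k n), (0 < n)%N ->
    D n X -> D n Y -> D n (fun j => a *: X j + b *: Y j) ->
    F n (fun j => a *: X j + b *: Y j) = a *: F n X + b *: F n Y.

From HB Require Import structures.
From mathcomp Require Import all_boot all_order all_algebra.
From mathcomp Require Import sesquilinear spectral.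
From Stdlib Require Import FunctionalExtensionality ClassicalEpsilon.
Import Order.TTheory GRing.Theory Num.Theory.
Local Open Scope ring_scope.

(* Since D(E) contains a neighbourhood of 0, linearity lets us extend F by
   homogeneity, Fext X := c^-1 F(c X) for small c != 0, to a linear free
   function on all tuples.  For each j, A |-> Fext(0,..,A,..,0) is then a
   linear free function of one variable.  Such a map is scalar on 1x1
   matrices, hence by direct sums on diagonal matrices, hence by unitary
   invariance and the spectral theorem on normal matrices, hence everywhere,
   since every matrix is the sum (A + A^* )/2 + (A - A^* )/2 of two normal
   ones.  Summing over j gives F(X) = sum_j a_j X_j. *)

Section Adjoint.
Context {C : numClosedFieldType} {n : nat}.
Implicit Types A U : 'M[C]_n.

Lemma adjmxE A : adjmx A = (A ^t*)%sesqui.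
Proof. by rewrite /adjmx map_trmx. Qed.

Lemma adjmxK A : adjmx (adjmx A) = A.
Proof. by apply/matrixP => i j; rewrite !mxE conjCK. Qed.

Lemma adjmxD A B : adjmx (A + B) = adjmx A + adjmx B.
Proof. by apply/matrixP => i j; rewrite !mxE rmorphD. Qed.

Lemma adjmxN A : adjmx (- A) = - adjmx A.
Proof. by apply/matrixP => i j; rewrite !mxE rmorphN. Qed.

Lemma normalmx_adjZ (c : C) A : adjmx A = c *: A -> A \is normalmx.
Proof.
by move=> adjA; apply/normalmxP; rewrite -adjmxE adjA -scalemxAl -scalemxAr.
Qed.

Lemma normalmx_addadj A : A + adjmx A \is normalmx.
Proof. by apply: (@normalmx_adjZ 1); rewrite scale1r adjmxD adjmxK addrC. Qed.

Lemma normalmx_subadj A : A - adjmx A \is normalmx.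
Proof.
by apply: (@normalmx_adjZ (-1)); rewrite scaleN1r adjmxD adjmxN adjmxK opprB addrC.
Qed.

Lemma cartesian_splitmx A : A = 2^-1 *: (A + adjmx A) + 2^-1 *: (A - adjmx A).
Proof.
rewrite -scalerDr addrACA subrr addr0 -mulr2n -scaler_nat scalerA.
by rewrite mulVf ?pnatr_eq0 ?scale1r.
Qed.

Lemma unitarymx_unitary_mx U : U \is unitarymx -> unitary_mx U.
Proof.
move=> /unitarymxP UUt; have UtU := mulmx1C UUt.
by split; rewrite adjmxE.
Qed.

Lemma normalmx_unitary_diag A : A \is normalmx ->
  exists U (d : 'rV_n), unitary_mx U /\ A = adjmx U *m diag_mx d *m U.
Proof.
move=> /orthomx_spectralP defA; have Uu := spectral_unitarymx A.
exists (spectralmx A), (spectral_diag A); split; first exact: unitarymx_unitary_mx.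
by rewrite adjmxE -invmx_unitary.
Qed.

End Adjoint.

Section FreeLinearMap.
Variables (C : numClosedFieldType) (g : forall n, 'M[C]_n -> 'M[C]_n).
Hypothesis g_linear : forall n (a b : C) A B, (0 < n)%N ->
  g n (a *: A + b *: B) = a *: g n A + b *: g n B.
Hypothesis g_unitary : forall n U A, (0 < n)%N -> unitary_mx U ->
  g n (adjmx U *m A *m U) = adjmx U *m g n A *m U.
Hypothesis g_block : forall n m A B, (0 < n)%N -> (0 < m)%N ->
  g (n + m)%N (block_mx A 0 0 B) = block_mx (g n A) 0 0 (g m B).

Local Notation a := (g 1%N 1%:M 0 0).

Lemma free_mapZ n c A : (0 < n)%N -> g n (c *: A) = c *: g n A.
Proof. by move=> n0; have := g_linear n c 0 A 0 n0; rewrite !scale0r !addr0. Qed.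

Lemma free_map_mx1 (A : 'M_1) : g 1%N A = a *: A.
Proof.
have -> : A = A 0 0 *: 1%:M by rewrite scalemx1 -mx11_scalar.
by rewrite free_mapZ // scalerA mulrC -scalerA scalemx1 -mx11_scalar.
Qed.

Lemma free_map_diag m (d : 'rV_m.+1) : g m.+1 (diag_mx d) = a *: diag_mx d.
Proof.
elim: m d => [|m IH] d; first exact: free_map_mx1.
pose d' : 'rV_(1 + m.+1) := d.
have -> : diag_mx d = diag_mx (row_mx (lsubmx d') (rsubmx d')) by rewrite hsubmxK.
rewrite diag_mx_row (g_block 1 m.+1) // free_map_mx1 IH.
by have := scale_block_mx a (diag_mx (lsubmx d')) 0 0 (diag_mx (rsubmx d'));
  rewrite !scaler0 => ->.
Qed.

Lemma free_map_normal n A : (0 < n)%N -> A \is normalmx -> g n A = a *: A.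
Proof.
case: n A => // m A _ /normalmx_unitary_diag [U [d [Uu ->]]].
by rewrite g_unitary // free_map_diag -scalemxAr -scalemxAl.
Qed.

Lemma free_mapE n A : (0 < n)%N -> g n A = a *: A.
Proof.
move=> n0; rewrite [in LHS](cartesian_splitmx A) g_linear //.
rewrite (free_map_normal _ _ n0 (normalmx_addadj A)).
rewrite (free_map_normal _ _ n0 (normalmx_subadj A)).
by rewrite !scalerA mulrC -!scalerA -scalerDr -(cartesian_splitmx A).
Qed.

End FreeLinearMap.

Definition tscale {C : numClosedFieldType} {k n : nat} (c : C) (X : tup C k n) :
  tup C k n := fun j => c *: X j.

Definition tdelta {C : numClosedFieldType} {k n : nat} (j : 'I_k) (A : 'M[C]_n) :
  tup C k n := fun i => (i == j)%:R *: A.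

Definition near0 {C : numClosedFieldType} (P : C -> Prop) : Prop :=
  exists2 r : C, 0 < r & forall c, `|c| <= r -> P c.

Section Near0.
Context {C : numClosedFieldType}.
Implicit Types P Q : C -> Prop.

Lemma near0_and {P Q} : near0 P -> near0 Q -> near0 (fun c => P c /\ Q c).
Proof.
move=> [r1 r1_gt0 P1] [r2 r2_gt0 Q2].
have [le12|le21] := orP (real_leVge (gtr0_real r1_gt0) (gtr0_real r2_gt0)).
- by exists r1 => // c cr; split; [exact: P1 | apply: Q2; exact: le_trans le12].
- by exists r2 => // c cr; split; [apply: P1; exact: le_trans le21 | exact: Q2].
Qed.

Lemma near0_nonzero {P} : near0 P -> exists2 c, c != 0 & P c.
Proof.
by move=> [r r_gt0 Pr]; exists r; [rewrite lt0r_neq0 | apply: Pr; rewrite gtr0_norm].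
Qed.

Lemma near0_tscale {k n} {Dn : tup C k n -> Prop} (X : tup C k n) :
  contains_nbhd0 Dn -> near0 (fun c => Dn (tscale c X)).
Proof.
move=> [eps [eps_gt0 ballD]].
pose S := \sum_(t : 'I_k * 'I_n * 'I_n) `|X t.1.1 t.1.2 t.2|.
have S_ge0 : 0 <= S by apply: sumr_ge0.
have leS j i l : `|X j i l| <= S by rewrite /S (bigD1 (j, i, l)) //= lerDl sumr_ge0.
have S1_gt0 : 0 < S + 1 by apply: ltr_wpDl S_ge0 ltr01.
exists (eps / (S + 1)) => [|c cr]; first by rewrite divr_gt0.
apply: ballD => j i l; rewrite mxE normrM.
apply: le_lt_trans (ler_pM (normr_ge0 _) (normr_ge0 _) cr (leS j i l)) _.
by rewrite mulrAC ltr_pdivrMr // ltr_pM2l // ltrDl.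
Qed.

End Near0.

Lemma tup_sum_delta {C : numClosedFieldType} {k n} (X : tup C k n) :
  X = (fun i => \sum_(j < k) tdelta j (X j) i).
Proof.
apply: functional_extensionality => i; rewrite (bigD1 i) //= /tdelta eqxx scale1r.
rewrite big1 ?addr0 // => j /negbTE; rewrite eq_sym => ->; exact: scale0r.
Qed.

Section LinearExtension.
Context {C : numClosedFieldType} {k : nat} {D : forall n, tup C k n -> Prop}.
Context {F : forall n, tup C k n -> 'M[C]_n}.
Hypothesis freeD : free_set D.
Hypothesis nbhdD : forall n, (0 < n)%N -> contains_nbhd0 (D n).
Hypothesis freeF : free_fun D F.
Hypothesis linF : linear_on D F.

Lemma F_homogeneous n (X : tup C k n) c c' : (0 < n)%N -> c != 0 -> c' != 0 ->
  D n (tscale c X) -> D n (tscale c' X) ->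
  c^-1 *: F n (tscale c X) = c'^-1 *: F n (tscale c' X).
Proof.
move=> n0 c0 c'0 DcX Dc'X.
have cc'X : (fun j => (c' / c) *: tscale c X j + 0 *: tscale c X j) = tscale c' X.
  by apply: functional_extensionality => j; rewrite /tscale scale0r addr0 scalerA divfK.
have := linF n (c' / c) 0 _ _ n0 DcX DcX; rewrite cc'X => /(_ Dc'X) ->.
by rewrite scale0r addr0 scalerA mulKf.
Qed.

Lemma tscale_witness {n} (X : tup C k n) :
  exists c, (0 < n)%N -> c != 0 /\ D n (tscale c X).
Proof.
case: n X => [|n] X; first by exists 0.
by have [c c0 DcX] := near0_nonzero (near0_tscale X (nbhdD n.+1 isT)); exists c.
Qed.

Definition Fext {n} (X : tup C k n) : 'M[C]_n :=
  let c := proj1_sig (constructive_indefinite_description _ (tscale_witness X)) in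
  c^-1 *: F n (tscale c X).

Lemma FextE {n} (X : tup C k n) c : (0 < n)%N -> c != 0 -> D n (tscale c X) ->
  Fext X = c^-1 *: F n (tscale c X).
Proof.
move=> n0 c0 DcX; rewrite /Fext.
case: constructive_indefinite_description => c' /= /(_ n0) [c'0 Dc'X].
exact: F_homogeneous.
Qed.

Lemma Fext_eq {n} (X : tup C k n) : (0 < n)%N -> D n X -> Fext X = F n X.
Proof.
move=> n0 DX; have X1 : tscale 1 X = X.
  by apply: functional_extensionality => j; rewrite /tscale scale1r.
by rewrite (FextE X 1 n0) ?oner_eq0 ?X1 // invr1 scale1r.
Qed.

Lemma Fext_linear n (a b : C) (X Y : tup C k n) : (0 < n)%N ->
  Fext (fun j => a *: X j + b *: Y j) = a *: Fext X + b *: Fext Y.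
Proof.
move=> n0; set Z := fun j => _.
have [c c0 [[DcX DcY] DcZ]] := near0_nonzero (near0_and
  (near0_and (near0_tscale X (nbhdD _ n0)) (near0_tscale Y (nbhdD _ n0)))
  (near0_tscale Z (nbhdD _ n0))).
have cZ : (fun j => a *: tscale c X j + b *: tscale c Y j) = tscale c Z.
  apply: functional_extensionality => j.
  by rewrite /tscale /Z scalerDr !scalerA (mulrC a) (mulrC b).
have := linF n a b _ _ n0 DcX DcY; rewrite cZ => /(_ DcZ) FcZ.
rewrite (FextE Z c n0) // (FextE X c n0) // (FextE Y c n0) // FcZ.
by rewrite scalerDr !scalerA (mulrC c^-1 a) (mulrC c^-1 b).
Qed.

Lemma Fext_unitary n U (X : tup C k n) : (0 < n)%N -> unitary_mx U ->
  Fext (fun j => adjmx U *m X j *m U) = adjmx U *m Fext X *m U.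
Proof.
move=> n0 Uu; have [DU _] := freeD; have [FU _] := freeF.
have [c c0 DcX] := near0_nonzero (near0_tscale X (nbhdD _ n0)).
have cUX : tscale c (fun j => adjmx U *m X j *m U) =
           (fun j => adjmx U *m tscale c X j *m U).
  by apply: functional_extensionality => j; rewrite /tscale -scalemxAr -scalemxAl.
rewrite (FextE _ c n0 c0); last by rewrite cUX; exact: DU.
by rewrite cUX FU // (FextE X c n0 c0 DcX) -scalemxAr -scalemxAl.
Qed.

Lemma Fext_block n m (X : tup C k n) (Y : tup C k m) : (0 < n)%N -> (0 < m)%N ->
  Fext (fun j => block_mx (X j) 0 0 (Y j)) = block_mx (Fext X) 0 0 (Fext Y).
Proof.
move=> n0 m0; have [_ Dblk] := freeD; have [_ Fblk] := freeF.
have [c c0 [DcX DcY]] := near0_nonzero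
  (near0_and (near0_tscale X (nbhdD _ n0)) (near0_tscale Y (nbhdD _ m0))).
have cXY : tscale c (fun j => block_mx (X j) 0 0 (Y j)) =
           (fun j => block_mx (tscale c X j) 0 0 (tscale c Y j)).
  by apply: functional_extensionality => j; rewrite /tscale scale_block_mx !scaler0.
have nm0 : (0 < n + m)%N by rewrite addn_gt0 n0.
rewrite (FextE _ c nm0 c0); last by rewrite cXY; exact: Dblk.
rewrite cXY Fblk // (FextE X c n0 c0 DcX) (FextE Y c m0 c0 DcY).
by rewrite scale_block_mx !scaler0.
Qed.

Lemma Fext_sum n (I : Type) (r : seq I) (f : I -> tup C k n) : (0 < n)%N ->
  Fext (fun i => \sum_(j <- r) f j i) = \sum_(j <- r) Fext (f j).
Proof.
move=> n0; elim: r => [|j r IH].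
  have -> : (fun i => \sum_(j <- [::]) f j i) = (fun=> 0).
    by apply: functional_extensionality => i; rewrite big_nil.
  have := Fext_linear n 0 0 (fun=> 0) (fun=> 0) n0.
  by rewrite !scale0r addr0 big_nil.
have -> : (fun i => \sum_(j0 <- j :: r) f j0 i) =
          (fun i => 1 *: f j i + 1 *: \sum_(j0 <- r) f j0 i).
  by apply: functional_extensionality => i; rewrite big_cons !scale1r.
by rewrite Fext_linear // IH big_cons !scale1r.
Qed.

Lemma Fext_delta n j (A : 'M[C]_n) : (0 < n)%N ->
  Fext (tdelta j A) = Fext (tdelta j (1%:M : 'M_1)) 0 0 *: A.
Proof.
move=> n0; apply: (@free_mapE C (fun m B => Fext (tdelta j B))) n0 => {n A}.
- move=> n a b A B n0; rewrite -Fext_linear //; congr Fext.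
  apply: functional_extensionality => i.
  by rewrite /tdelta scalerDr !scalerA (mulrC a) (mulrC b).
- move=> n U A n0 Uu; rewrite -Fext_unitary //; congr Fext.
  by apply: functional_extensionality => i; rewrite /tdelta -scalemxAr -scalemxAl.
- move=> n m A B n0 m0; rewrite -Fext_block //; congr Fext.
  by apply: functional_extensionality => i; rewrite /tdelta scale_block_mx !scaler0.
Qed.

End LinearExtension.

Theorem mainTheorem12 (C : numClosedFieldType) (k : nat)
  (D : forall n : nat, tup C k n -> Prop)
  (F : forall n : nat, tup C k n -> 'M[C]_n) :
  free_set D ->
  (forall n : nat, (0 < n)%N -> contains_nbhd0 (D n)) ->
  free_fun D F ->
  linear_on D F ->
  exists a : 'I_k -> C,
    forall (n : nat) (X : tup C k n), (0 < n)%N -> D n X ->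
      F n X = \sum_(j < k) a j *: X j.
Proof.
move=> freeD nbhdD freeF linF.
exists (fun j => Fext (F := F) nbhdD (tdelta j (1%:M : 'M_1)) 0 0) => n X n0 DX.
rewrite -(Fext_eq nbhdD linF X n0 DX) {1}(tup_sum_delta X) Fext_sum //.
by apply: eq_bigr => j _; exact: Fext_delta.
Qed.
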